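(* Let $\sigma$ be a two-qubit density matrix, $U$ a single-qubit unitary, and $R>0$, $T>0$. Consider the following test round. The client chooses $d\in\{0,1\}$, $\theta\in\Theta$ and $r\in\{0,1\}$ uniformly and independently. A dummy qubit in state $|d\rangle$ and a trap qubit in state $|+_\theta\rangle$ are each transmitted to the server through the rotated teleportation channel $\Lambda_{\sigma,U}$ (each using its own copy of $\sigma$). The entangled states are delivered at random times whose inter-delivery times are independent and identically distributed; let $\Delta t$ be the time between the delivery of the two qubits, with $\mathbb{E}[\Delta t]=1/R$, and $\Delta t$ independent of $(d,\theta,r)$. The qubit delivered first (either one) is stored during time $\Delta t$ in a depolarizing memory with coherence time $T$, i.e. it undergoes $\rho\mapsto p\rho+(1-p)\mathbf 1/2$ with $p=e^{-\Delta t/T}$. All local operations are noiseless and instantaneous. The server then applies a controlled-$Z$ gate to the two qubits and measures the trap qubit in the basis $\{|+_\delta\rangle,|-_\delta\rangle\}$ with $\delta=\theta+r\pi$ (outcome $0$ for $|+_\delta\rangle$, $1$ for $|-_\delta\rangle$); the round fails if the outcome differs from $d\oplus r$. Let $q$ be the expected failure probability (averaged over $d,\theta,r,\Delta t$ and the measurement). Define $$\bar F_{\mathrm{dummy}}=\tfrac12\big(\langle 0|\Lambda_{\sigma,U}(|0\rangle\langle0|)|0\rangle+\langle 1|\Lambda_{\sigma,U}(|1\rangle\langle1|)|1\rangle\big),\qquad \bar F_{\mathrm{trap}}=\tfrac18\sum_{\theta\in\Theta}\langle+_\theta|\Lambda_{\sigma,U}(|+_\theta\rangle\langle+_\theta|)|+_\theta\rangle.$$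 If $\bar F_{\mathrm{dummy}}(1-\bar F_{\mathrm{trap}})+\bar F_{\mathrm{trap}}(1-\bar F_{\mathrm{dummy}})\le\frac12$, then $$q\le e^{-\frac{1}{RT}}\Big[\bar F_{\mathrm{dummy}}(1-\bar F_{\mathrm{trap}})+\bar F_{\mathrm{trap}}(1-\bar F_{\mathrm{dummy}})\Big]+\tfrac12\big(1-e^{-\frac{1}{RT}}\big).$$
   Context: $\Theta=\{i\pi/4\}_{0\le i\le7}$ and $|\pm_\theta\rangle=\frac1{\sqrt2}(|0\rangle\pm e^{i\theta}|1\rangle)$. Let $|\Phi^+\rangle=\frac1{\sqrt2}(|00\rangle+|11\rangle)$ and $|\Phi_{ij}\rangle=(X^iZ^j\otimes\mathbf 1)|\Phi^+\rangle$ for $i,j\in\{0,1\}$. For a two-qubit state $\sigma$ on registers $S$ (sender) and $R$ (receiver), the teleportation channel is the single-qubit channel $\Lambda_\sigma(\rho)=\sum_{i,j\in\{0,1\}}X^iZ^j\,\langle\Phi_{ij}|_{IS}(\rho_I\otimes\sigma_{SR})|\Phi_{ij}\rangle_{IS}\,(X^iZ^j)^\dagger$ (Bell measurement on the input register $I$ and $S$, followed by Pauli correction on $R$). For a single-qubit unitary $U$, the rotated teleportation channel is $\Lambda_{\sigma,U}(\rho)=U^\dagger\Lambda_\sigma(U\rho U^\dagger)U$. *)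

From mathcomp Require Import all_boot all_algebra.
From mathcomp Require Import complex mxtens.
From mathcomp Require Import all_classical all_reals all_analysis.
Set Implicit Arguments. Unset Strict Implicit. Unset Printing Implicit Defensive.
Import GRing.Theory Num.Theory.
Local Open Scope ring_scope.

Section Qubits.
Variable R : realType.
Local Notation C := R[i].

Definition adj {m n} (A : 'M[C]_(m, n)) : 'M[C]_(n, m) := (map_mx conjc A)^T.

Definition density {n} (rho : 'M[C]_n) : Prop :=
  adj rho = rho /\ (forall v : 'cV[C]_n, 0 <= (adj v *m rho *m v) 0 0) /\ \tr rho = 1.

Definition unitary {n} (U : 'M[C]_n) : Prop := adj U *m U = 1%:M.

Definition ket (b : bool) : 'cV[C]_2 := \col_(k < 2) ((k : nat) == b)%:R.

Definition expi (t : R) : C := (cos t +i* sin t)%C.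
Definition invsqrt2 : C := ((Num.sqrt (2 : R))^-1)%:C%C.

Definition ket_plus (t : R) : 'cV[C]_2 := invsqrt2 *: (ket false + expi t *: ket true).
Definition ket_minus (t : R) : 'cV[C]_2 := invsqrt2 *: (ket false - expi t *: ket true).

Definition proj {n} (v : 'cV[C]_n) : 'M[C]_n := v *m adj v.

Definition theta_of (k : 'I_8) : R := (k%:R * pi) / 4.

Definition PX : 'M[C]_2 := \matrix_(i < 2, j < 2) ((i : nat) != j)%:R.
Definition PZ : 'M[C]_2 := \matrix_(i < 2, j < 2) (if (i : nat) == j then (-1) ^+ i else 0).
Definition pauli (i j : bool) : 'M[C]_2 :=
  (if i then PX else 1%:M) *m (if j then PZ else 1%:M).

Definition PhiP : 'cV[C]_(2 * 2) :=
  invsqrt2 *: (tensmx (ket false) (ket false) + tensmx (ket true) (ket true)).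
Definition Phi (i j : bool) : 'cV[C]_(2 * 2) := tensmx (pauli i j) (1%:M : 'M[C]_2) *m PhiP.

Definition bellbra (i j : bool) : 'M[C]_(1 * 2, (2 * 2) * 2) :=
  tensmx (adj (Phi i j)) (1%:M : 'M[C]_2).

(** teleportation channel Lambda_sigma; registers ordered I, S, R *)
Definition teleport (sigma : 'M[C]_(2 * 2)) (rho : 'M[C]_2) : 'M[C]_2 :=
  \sum_(i : bool) \sum_(j : bool)
     pauli i j *m (bellbra i j *m tensmx rho sigma *m adj (bellbra i j)) *m adj (pauli i j).

Definition rteleport (sigma : 'M[C]_(2 * 2)) (U : 'M[C]_2) (rho : 'M[C]_2) : 'M[C]_2 :=
  adj U *m teleport sigma (U *m rho *m adj U) *m U.

Definition depol (p : R) (rho : 'M[C]_2) : 'M[C]_2 :=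
  p%:C%C *: rho + ((1 - p) / 2)%:C%C *: 1%:M.

Definition CZ : 'M[C]_(2 * 2) :=
  tensmx (proj (ket false)) (1%:M : 'M[C]_2) + tensmx (proj (ket true)) PZ.

(** probability that the round fails for fixed d, theta, r, and memory
    parameter p; [trap_first] says which qubit is delivered first (and hence
    stored in memory). Register order: dummy (x) trap. *)
Definition round_fail (sigma : 'M[C]_(2 * 2)) (U : 'M[C]_2) (trap_first : bool)
    (p : R) (d : bool) (k : 'I_8) (r : bool) : R :=
  let th := theta_of k in
  let rd := rteleport sigma U (proj (ket d)) in
  let rt := rteleport sigma U (proj (ket_plus th)) in
  let rd' := if trap_first then rd else depol p rd in
  let rt' := if trap_first then depol p rt else rt in
  let rho := CZ *m tensmx rd' rt' *m adj CZ in
  let delta := th + r%:R * pi in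
  (* the failing outcome is the one different from d xor r *)
  let wrong := ~~ (d (+) r) in
  let v := if wrong then ket_minus delta else ket_plus delta in
  complex.Re (\tr (tensmx (1%:M : 'M[C]_2) (proj v) *m rho)).

Definition avg_fail (sigma : 'M[C]_(2 * 2)) (U : 'M[C]_2) (trap_first : bool) (p : R) : R :=
  (32%:R)^-1 * \sum_(d : bool) \sum_(k < 8) \sum_(r : bool)
                 round_fail sigma U trap_first p d k r.

Definition fid (sigma : 'M[C]_(2 * 2)) (U : 'M[C]_2) (v : 'cV[C]_2) : R :=
  complex.Re ((adj v *m rteleport sigma U (proj v) *m v) 0 0).

Definition Fdummy sigma U : R :=
  2^-1 * (fid sigma U (ket false) + fid sigma U (ket true)).

Definition Ftrap sigma U : R :=
  8^-1 * \sum_(k < 8) fid sigma U (ket_plus (theta_of k)).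

End Qubits.

From Pilot Require Import Defs.
From mathcomp Require Import all_boot all_algebra.
From mathcomp Require Import complex mxtens.
From mathcomp Require Import all_classical all_reals all_analysis.
From mathcomp Require Import ring lra.
Import order.Order.TTheory GRing.Theory Num.Theory.
Local Open Scope ring_scope.
Set Implicit Arguments. Unset Strict Implicit. Unset Printing Implicit Defensive.

(* The teleportation channel is trace preserving and Hermiticity preserving,
   because the Bell projectors sum to the identity, which in turn follows from
   the Pauli twirl [sum_(a,b) P_ab M P_ab^* = 2 tr(M) 1].  For Hermitian
   trace-one dummy and trap states A and B, the controlled-Z followed by the
   measurement of the trap qubit fails with probability [x (1 - y) + y (1 - x)],
   where [x = <d|A|d>] and [y = <+_th|B|+_th>].  This is affine in each of the
   two fidelities, so averaging over d, theta, r yields the same expression in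
   the averaged fidelities, and a depolarizing memory with parameter p turns it
   into [1/2 + p (Fd (1 - Ft) + Ft (1 - Fd) - 1/2)].  The coefficient of p is
   nonpositive by hypothesis, so Jensen's inequality
   [E[exp (- dt / T)] >= exp (- E[dt] / T)] concludes. *)

Section Tensor.
Variable R : comPzRingType.

Lemma tensmxZl m n p q c (A : 'M[R]_(m, n)) (B : 'M[R]_(p, q)) :
  (c *: A) *t B = c *: (A *t B).
Proof. by apply/matrixP=> i j; rewrite !mxE mulrA. Qed.

Lemma tensmx_suml m n p q (I : finType) (F : I -> 'M[R]_(m, n)) (B : 'M[R]_(p, q)) :
  (\sum_i F i) *t B = \sum_i F i *t B.
Proof.
apply/matrixP=> i j; rewrite !mxE !summxE mulr_suml.
by apply: eq_bigr=> k _; rewrite !mxE.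
Qed.

Lemma tensmx_sumr m n p q (I : finType) (A : 'M[R]_(m, n)) (F : I -> 'M[R]_(p, q)) :
  A *t (\sum_i F i) = \sum_i A *t F i.
Proof.
apply/matrixP=> i j; rewrite !mxE !summxE mulr_sumr.
by apply: eq_bigr=> k _; rewrite !mxE.
Qed.

Lemma mxtrace_tensmx m n (A : 'M[R]_m) (B : 'M[R]_n) : \tr (A *t B) = \tr A * \tr B.
Proof. by rewrite /mxtrace mulr_sum; apply: eq_bigr=> i _; rewrite mxE. Qed.

Lemma tensmx11 m n : (1%:M : 'M[R]_m) *t (1%:M : 'M[R]_n) = 1%:M.
Proof.
apply/matrixP=> i j; case: (mxtens_indexP i)=> i1 i2; case: (mxtens_indexP j)=> j1 j2.
rewrite tensmxE !mxE (inj_eq (can_inj (@mxtens_indexK m n))) xpair_eqE.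
by case: (i1 == j1); case: (i2 == j2); rewrite ?mulr1 ?mulr0 ?mul0r.
Qed.

End Tensor.

Section Qubit.
Variable R : realType.
Local Notation C := R[i].

Lemma adjM m n p (A : 'M[C]_(m, n)) (B : 'M[C]_(n, p)) :
  adj (A *m B) = adj B *m adj A.
Proof. by rewrite /adj map_mxM trmx_mul. Qed.

Lemma adjK m n (A : 'M[C]_(m, n)) : adj (adj A) = A.
Proof. by apply/matrixP=> i j; rewrite !mxE conjcK. Qed.

Lemma adjD m n (A B : 'M[C]_(m, n)) : adj (A + B) = adj A + adj B.
Proof. by rewrite /adj map_mxD linearD. Qed.

Lemma adjZ m n c (A : 'M[C]_(m, n)) : adj (c *: A) = conjc c *: adj A.
Proof. by apply/matrixP=> i j; rewrite !mxE rmorphM. Qed.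

Lemma adj1 n : adj (1%:M : 'M[C]_n) = 1%:M.
Proof. by rewrite /adj map_mx1 trmx1. Qed.

Lemma adj_sum m n (I : finType) (F : I -> 'M[C]_(m, n)) :
  adj (\sum_i F i) = \sum_i adj (F i).
Proof. by rewrite /adj raddf_sum /= raddf_sum. Qed.

Lemma adj_tensmx m n p q (A : 'M[C]_(m, n)) (B : 'M[C]_(p, q)) :
  adj (A *t B) = adj A *t adj B.
Proof. by rewrite /adj map_mxT trmx_tens. Qed.

(* [adj_tensmx] at the column type ['cV_(m * p)], whose column index [1] is only
   convertible to the [1 * 1] expected by [adj_tensmx]. *)
Lemma adj_tensmx_col m p (u : 'cV[C]_m) (v : 'cV[C]_p) :
  adj (u *t v : 'cV_(m * p)) = adj u *t adj v.
Proof. exact: (adj_tensmx u v). Qed.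

Lemma adj_conjmx m n (A : 'M[C]_(m, n)) (X : 'M[C]_n) :
  adj (A *m X *m adj A) = A *m adj X *m adj A.
Proof. by rewrite !adjM adjK mulmxA. Qed.

Lemma mxtrace_unitary_conj n (A X : 'M[C]_n) :
  adj A *m A = 1%:M -> \tr (A *m X *m adj A) = \tr X.
Proof. by move=> uA; rewrite mxtrace_mulC mulmxA uA mul1mx. Qed.

Lemma proj_mulmx m n (A : 'M[C]_(m, n)) (v : 'cV[C]_n) :
  Defs.proj (A *m v) = A *m Defs.proj v *m adj A.
Proof. by rewrite /Defs.proj adjM !mulmxA. Qed.

Lemma adj_proj n (v : 'cV[C]_n) : adj (Defs.proj v) = Defs.proj v.
Proof. by rewrite /Defs.proj adjM adjK. Qed.

Lemma adj_ket b : adj (ket R b) = (ket R b)^T.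
Proof. by apply/matrixP=> i j; rewrite !mxE conjc_nat. Qed.

Lemma ord2_cases (i : 'I_2) : i = ord0 \/ i = lift ord0 ord0.
Proof. by case: i => [[|[|//]]] ?; [left | right]; apply: val_inj. Qed.

Ltac mx2_entrywise :=
  let i := fresh "i" in let j := fresh "j" in
  apply/matrixP => i j; case: (ord2_cases i) => ->; case: (ord2_cases j) => ->;
  rewrite ?(mxE, big_ord_recl, big_ord0) /bump /=.

Lemma adj_PX : adj (PX R) = PX R.
Proof. by apply/matrixP=> i j; rewrite !mxE conjc_nat eq_sym. Qed.

Lemma adj_PZ : adj (PZ R) = PZ R.
Proof.
apply/matrixP=> i j; rewrite !mxE eq_sym; case: eqP => [->|_]; last exact: conjc0.
by rewrite rmorphXn rmorphN1.
Qed.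

Lemma PX_invol : PX R *m PX R = 1%:M.
Proof. mx2_entrywise; ring. Qed.

Lemma PZ_invol : PZ R *m PZ R = 1%:M.
Proof. mx2_entrywise; ring. Qed.

Lemma pauli_unitary a b : adj (pauli R a b) *m pauli R a b = 1%:M.
Proof.
case: a; case: b; rewrite /pauli ?mulmx1 ?mul1mx ?adjM ?adj_PX ?adj_PZ ?adj1;
  rewrite ?mulmx1 ?mul1mx ?PX_invol ?PZ_invol //.
by rewrite mulmxA -(mulmxA (PZ R)) PX_invol mulmx1 PZ_invol.
Qed.

Lemma pauli_twirl (M : 'M[C]_2) :
  \sum_(a : bool) \sum_(b : bool) pauli R a b *m M *m adj (pauli R a b) = (2 * \tr M) *: 1%:M.
Proof.
under eq_bigr do rewrite big_bool.
rewrite big_bool /pauli !adjM adj_PX adj_PZ adj1 !mulmx1 !mul1mx /mxtrace.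
by mx2_entrywise; ring.
Qed.

Lemma conjc_invsqrt2 : conjc (invsqrt2 R) = invsqrt2 R.
Proof. exact: conjc_real. Qed.

Lemma invsqrt2_sqr : invsqrt2 R * invsqrt2 R = 2^-1.
Proof.
rewrite /invsqrt2 -rmorphM /= -invfM -expr2 sqr_sqrtr ?ler0n //.
by rewrite rmorphV ?unitfE ?pnatr_eq0 //= rmorph_nat.
Qed.

Definition ketbra (c c' : bool) : 'M[C]_2 := ket R c *m adj (ket R c').

Lemma mxtrace_ketbra c c' : \tr (ketbra c c') = (c == c')%:R.
Proof.
rewrite /ketbra adj_ket /mxtrace.
by case: c; case: c'; rewrite ?(mxE, big_ord_recl, big_ord0) /=; ring.
Qed.

Lemma sum_ketbra : \sum_(c : bool) ketbra c c = 1%:M.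
Proof. by rewrite big_bool /ketbra !adj_ket; mx2_entrywise; ring. Qed.

Lemma proj_PhiP :
  Defs.proj (PhiP R) = 2^-1 *: \sum_(c : bool) \sum_(c' : bool) ketbra c c' *t ketbra c c'.
Proof.
have -> : PhiP R = invsqrt2 R *: \sum_(c : bool) ket R c *t ket R c.
  by rewrite /PhiP big_bool addrC.
rewrite /Defs.proj adjZ adj_sum -scalemxAl -scalemxAr scalerA conjc_invsqrt2 invsqrt2_sqr.
congr (_ *: _); rewrite mulmx_suml; apply: eq_bigr => c _.
rewrite mulmx_sumr; apply: eq_bigr => c' _.
by rewrite adj_tensmx_col; exact: (tensmx_mul (ket R c) (ket R c)).
Qed.

Lemma pauli_twirl_tensmx n (X : 'M[C]_2) (Y : 'M[C]_n) :
  \sum_(a : bool) \sum_(b : bool)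
     (pauli R a b *t 1%:M) *m (X *t Y) *m adj (pauli R a b *t 1%:M)
  = (2 * \tr X) *: (1%:M *t Y).
Proof.
under eq_bigr do under eq_bigr do rewrite adj_tensmx adj1 !tensmx_mul mul1mx mulmx1.
rewrite -tensmxZl -pauli_twirl; under eq_bigr do rewrite -tensmx_suml.
by rewrite -tensmx_suml.
Qed.

Lemma sum_proj_Phi : \sum_(a : bool) \sum_(b : bool) Defs.proj (Phi R a b) = 1%:M.
Proof.
have conj_sum (A : 'M[C]_(2 * 2)) (I : finType) (F : I -> 'M[C]_(2 * 2)) :
    A *m (\sum_i F i) *m adj A = \sum_i A *m F i *m adj A.
  by rewrite mulmx_sumr mulmx_suml.
under eq_bigr do under eq_bigr do
  rewrite proj_mulmx proj_PhiP -scalemxAr -scalemxAl conj_sum.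
under eq_bigr do under eq_bigr do under eq_bigr do rewrite conj_sum.
under eq_bigr do rewrite -scaler_sumr exchange_big.
rewrite -scaler_sumr exchange_big.
under eq_bigr do under eq_bigr do rewrite exchange_big.
under eq_bigr do rewrite exchange_big.
under eq_bigr do under eq_bigr do rewrite pauli_twirl_tensmx mxtrace_ketbra.
have diag c : \sum_(c' : bool) (2 * (c == c')%:R) *: (1%:M *t ketbra c c') =
    2 *: (1%:M *t ketbra c c).
  rewrite (bigD1 c) //= eqxx mulr1 big1 ?addr0 // => c' /negbTE.
  by rewrite eq_sym => ->; rewrite mulr0 scale0r.
under eq_bigr do rewrite diag.
by rewrite -scaler_sumr scalerA mulVf ?pnatr_eq0 // scale1r -tensmx_sumr sum_ketbra tensmx11.
Qed.

Lemma sum_bellbra :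
  \sum_(a : bool) \sum_(b : bool) adj (bellbra R a b) *m bellbra R a b = 1%:M.
Proof.
under eq_bigr do under eq_bigr do
  rewrite /bellbra adj_tensmx adjK adj1 tensmx_mul mulmx1 -[_ *m adj _]/(Defs.proj _).
under eq_bigr do rewrite -tensmx_suml.
by rewrite -tensmx_suml sum_proj_Phi tensmx11.
Qed.

Lemma mxtrace_teleport (sigma : 'M[C]_(2 * 2)) (X : 'M[C]_2) :
  \tr (teleport sigma X) = \tr X * \tr sigma.
Proof.
rewrite /teleport raddf_sum /=; under eq_bigr do rewrite raddf_sum /=.
under eq_bigr do under eq_bigr do
  rewrite mxtrace_unitary_conj ?pauli_unitary // mxtrace_mulC mulmxA.
under eq_bigr do rewrite -raddf_sum /= -mulmx_suml.
by rewrite -raddf_sum /= -mulmx_suml sum_bellbra mul1mx mxtrace_tensmx.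
Qed.

Lemma teleport_herm (sigma : 'M[C]_(2 * 2)) (X : 'M[C]_2) :
  adj sigma = sigma -> adj X = X -> adj (teleport sigma X) = teleport sigma X.
Proof.
move=> hsigma hX; rewrite /teleport adj_sum; apply: eq_bigr => a _.
rewrite adj_sum; apply: eq_bigr => b _.
by rewrite !adj_conjmx adj_tensmx hsigma hX.
Qed.

Lemma mxtrace_rteleport (sigma : 'M[C]_(2 * 2)) (U X : 'M[C]_2) :
  \tr sigma = 1 -> unitary U -> \tr (rteleport sigma U X) = \tr X.
Proof.
move=> tr_sigma uU; rewrite /rteleport mxtrace_mulC mulmxA (mulmx1C uU) mul1mx.
by rewrite mxtrace_teleport tr_sigma mulr1 mxtrace_unitary_conj.
Qed.

Lemma rteleport_herm (sigma : 'M[C]_(2 * 2)) (U X : 'M[C]_2) :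
  adj sigma = sigma -> adj X = X -> adj (rteleport sigma U X) = rteleport sigma U X.
Proof.
move=> hsigma hX; rewrite /rteleport !adjM adjK teleport_herm ?mulmxA //.
by rewrite adj_conjmx hX.
Qed.

Definition qform n (v : 'cV[C]_n) (M : 'M[C]_n) : C := (adj v *m M *m v) 0 0.

Lemma mxtrace_proj_mul n (v : 'cV[C]_n) (M : 'M[C]_n) :
  \tr (Defs.proj v *m M) = qform v M.
Proof. by rewrite /Defs.proj /qform -mulmxA mxtrace_mulC trace_mx11. Qed.

Lemma mxtrace_proj n (v : 'cV[C]_n) : \tr (Defs.proj v) = qform v 1%:M.
Proof. by rewrite -mxtrace_proj_mul mulmx1. Qed.

Lemma qform_adj n (v : 'cV[C]_n) (M : 'M[C]_n) : conjc (qform v M) = qform v (adj M).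
Proof.
have -> : conjc (qform v M) = adj (adj v *m M *m v) 0 0 by rewrite [RHS]mxE [RHS]mxE.
by rewrite !adjM adjK mulmxA.
Qed.

Lemma qform_herm_real n (v : 'cV[C]_n) (M : 'M[C]_n) :
  adj M = M -> qform v M = (complex.Re (qform v M))%:C%C.
Proof.
move=> hM; have : conjc (qform v M) = qform v M by rewrite qform_adj hM.
by case: (qform v M) => a b [] b0; congr (Complex _ _); lra.
Qed.

Lemma qformZ n c (v : 'cV[C]_n) (M : 'M[C]_n) : qform (c *: v) M = conjc c * c * qform v M.
Proof. by rewrite /qform adjZ -!scalemxAl -scalemxAr !mxE mulrA. Qed.

Lemma qform_ket_sum (M : 'M[C]_2) : qform (ket R false) M + qform (ket R true) M = \tr M.
Proof. by rewrite /qform !adj_ket /mxtrace ?(mxE, big_ord_recl, big_ord0) /bump /=; ring. Qed.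

Lemma qform_ket1 b : qform (ket R b) 1%:M = 1.
Proof.
by rewrite /qform adj_ket; case: b; rewrite ?(mxE, big_ord_recl, big_ord0) /bump /=; ring.
Qed.

Lemma expi_norm (t : R) : conjc (expi t) * expi t = 1.
Proof.
apply/eqP; rewrite eq_complex /= -(cos2Dsin2 t); apply/andP; split; apply/eqP; ring.
Qed.

Lemma qform_ket_minus (t : R) (M : 'M[C]_2) :
  qform (ket_minus t) M = \tr M - qform (ket_plus t) M.
Proof.
rewrite /ket_minus /ket_plus !qformZ conjc_invsqrt2 invsqrt2_sqr.
move: (expi t) (expi_norm t) => e e_unit.
have sum_pm : qform (ket R false - e *: ket R true) M + qform (ket R false + e *: ket R true) M
  = 2 * (qform (ket R false) M + conjc e * e * qform (ket R true) M).
  rewrite -scaleNr /qform !adjD !adjZ !adj_ket rmorphN.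
  by rewrite ?(mxE, big_ord_recl, big_ord0) /bump /=; ring.
rewrite e_unit mul1r qform_ket_sum in sum_pm.
apply/eqP; rewrite eq_sym subr_eq -mulrDr sum_pm mulrA mulVf ?mul1r ?pnatr_eq0 //.
Qed.

Lemma qform_ket_plus1 (t : R) : qform (ket_plus t) 1%:M = 1.
Proof.
rewrite /ket_plus qformZ conjc_invsqrt2 invsqrt2_sqr.
have -> : qform (ket R false + expi t *: ket R true) 1%:M = 1 + conjc (expi t) * expi t.
  by rewrite /qform !adjD !adjZ !adj_ket ?(mxE, big_ord_recl, big_ord0) /bump /=; ring.
by rewrite expi_norm mulVf ?pnatr_eq0.
Qed.

Lemma PZ_ket b : PZ R *m ket R b = (-1) ^+ b *: ket R b.
Proof.
apply/matrixP => i j; rewrite [j]ord1; case: (ord2_cases i) => ->; case: b;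
  by rewrite ?(mxE, big_ord_recl, big_ord0) /bump /=; ring.
Qed.

Lemma PZ_ket_plus (t : R) : PZ R *m ket_plus t = ket_minus t.
Proof.
by rewrite -scalemxAr mulmxDr -scalemxAr !PZ_ket expr0 expr1 scale1r scaleN1r scalerN.
Qed.

Lemma PZ_ket_minus (t : R) : PZ R *m ket_minus t = ket_plus t.
Proof.
by rewrite -scalemxAr mulmxBr -scalemxAr !PZ_ket expr0 expr1 scale1r scaleN1r scalerN opprK.
Qed.

Lemma qform_PZ_conj (v : 'cV[C]_2) (M : 'M[C]_2) :
  qform v (PZ R *m M *m PZ R) = qform (PZ R *m v) M.
Proof. by rewrite /qform adjM adj_PZ !mulmxA. Qed.

Lemma expi_addpi (t : R) : expi (t + pi) = - expi t.
Proof. by rewrite /expi cosDpi sinDpi; apply/eqP; rewrite eq_complex /= !eqxx. Qed.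

Lemma ket_plus_addpi (t : R) : ket_plus (t + pi) = ket_minus t.
Proof. by rewrite /ket_plus /ket_minus expi_addpi scaleNr. Qed.

Lemma ket_minus_addpi (t : R) : ket_minus (t + pi) = ket_plus t.
Proof. by rewrite /ket_plus /ket_minus expi_addpi scaleNr opprK. Qed.

Lemma qform_depol (v : 'cV[C]_2) (p : R) (M : 'M[C]_2) :
  qform v (depol p M) = p%:C%C * qform v M + ((1 - p) / 2)%:C%C * qform v 1%:M.
Proof. by rewrite /qform /depol mulmxDr mulmxDl -!scalemxAr -!scalemxAl !mxE. Qed.

Lemma depol_herm (p : R) (M : 'M[C]_2) : adj M = M -> adj (depol p M) = depol p M.
Proof. by move=> hM; rewrite /depol adjD !adjZ !conjc_real adj1 hM. Qed.

Lemma mxtrace_depol (p : R) (M : 'M[C]_2) : \tr M = 1 -> \tr (depol p M) = 1.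
Proof.
move=> trM; rewrite /depol mxtraceD !mxtraceZ trM mxtrace1 mulr1.
rewrite -(rmorph_nat (real_complex R) 2) -!rmorphM -rmorphD /=.
by have -> : p + (1 - p) / 2 * 2 = 1 by field.
Qed.

Lemma ket_orth b : adj (ket R b) *m ket R (~~ b) = 0.
Proof.
apply/matrixP => k l; rewrite [k]ord1 [l]ord1 adj_ket.
by case: b; rewrite !(mxE, big_ord_recl, big_ord0) /bump /=; ring.
Qed.

Lemma proj_ket_orth b : Defs.proj (ket R b) *m Defs.proj (ket R (~~ b)) = 0.
Proof. by rewrite /Defs.proj mulmxA -(mulmxA (ket R b)) ket_orth mulmx0 mul0mx. Qed.

Lemma mxtrace_proj_conj n (v : 'cV[C]_n) (M : 'M[C]_n) :
  qform v 1%:M = 1 -> \tr (Defs.proj v *m M *m Defs.proj v) = qform v M.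
Proof.
rewrite /qform mulmx1 => v_unit.
rewrite /Defs.proj mulmxA mxtrace_mulC !mulmxA trace_mx11 [adj v *m v]mx11_scalar v_unit.
by rewrite mul_scalar_mx scale1r.
Qed.

Lemma mxtrace_controlled_conj (I : finType) m n (P : I -> 'M[C]_m) (Z : I -> 'M[C]_n)
    (A : 'M[C]_m) (B M : 'M[C]_n) :
  (forall a b, a != b -> P b *m P a = 0) ->
  let G := \sum_a P a *t Z a in
  \tr ((1%:M *t M) *m (G *m (A *t B) *m G)) =
    \sum_a \tr (P a *m A *m P a) * \tr (M *m (Z a *m B *m Z a)).
Proof.
move=> P_orth /=; rewrite mulmx_suml mulmx_suml mulmx_sumr raddf_sum /=.
apply: eq_bigr => a _; rewrite mulmx_sumr mulmx_sumr raddf_sum /=.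
rewrite (bigD1 a) //= big1 ?addr0 => [|b ba].
  by rewrite !tensmx_mul mxtrace_tensmx mul1mx mulmxA.
rewrite !tensmx_mul mxtrace_tensmx mul1mx [\tr (P a *m A *m P b)]mxtrace_mulC !mulmxA.
by rewrite P_orth 1?eq_sym // mul0mx mxtrace0 mul0r.
Qed.

Lemma adj_CZ : adj (CZ R) = CZ R.
Proof. by rewrite /CZ adjD !adj_tensmx !adj_proj adj1 adj_PZ. Qed.

Lemma mxtrace_CZ_measure (A B : 'M[C]_2) (v : 'cV[C]_2) :
  \tr ((1%:M *t Defs.proj v) *m (CZ R *m (A *t B) *m adj (CZ R))) =
  qform (ket R false) A * qform v B + qform (ket R true) A * qform (PZ R *m v) B.
Proof.
rewrite adj_CZ.
have -> : CZ R = \sum_(a : bool) Defs.proj (ket R a) *t (if a then PZ R else 1%:M).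
  by rewrite /CZ big_bool addrC.
rewrite mxtrace_controlled_conj => [|a b]; last by case: a; case: b; rewrite ?proj_ket_orth.
rewrite big_bool addrC !mxtrace_proj_conj ?qform_ket1 // !mxtrace_proj_mul mulmx1 mul1mx.
by rewrite qform_PZ_conj.
Qed.

Definition mismatch (x y : R) : R := x * (1 - y) + y * (1 - x).

Lemma Re_CZ_measure (A B : 'M[C]_2) d th :
  adj A = A -> adj B = B -> \tr A = 1 -> \tr B = 1 ->
  complex.Re (\tr ((1%:M *t Defs.proj (if d then ket_plus th else ket_minus th))
                  *m (CZ R *m (A *t B) *m adj (CZ R))))
  = mismatch (complex.Re (qform (ket R d) A)) (complex.Re (qform (ket_plus th) B)).
Proof.
move=> hA hB trA trB; have sumA := qform_ket_sum A; rewrite trA in sumA.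
rewrite mxtrace_CZ_measure.
case: d; rewrite ?PZ_ket_plus ?PZ_ket_minus qform_ket_minus trB.
  have -> : qform (ket R false) A = 1 - qform (ket R true) A by rewrite -sumA addrK.
  rewrite [qform (ket R true) A]qform_herm_real // [qform _ B]qform_herm_real //.
  by rewrite /mismatch /=; ring.
have -> : qform (ket R true) A = 1 - qform (ket R false) A by rewrite -sumA addrC addKr.
rewrite [qform (ket R false) A]qform_herm_real // [qform _ B]qform_herm_real //.
by rewrite /mismatch /=; ring.
Qed.

Definition depol_fid (p x : R) : R := p * x + (1 - p) / 2.

Lemma Re_qform_depol (v : 'cV[C]_2) (p : R) (M : 'M[C]_2) :
  qform v 1%:M = 1 ->
  complex.Re (qform v (depol p M)) = depol_fid p (complex.Re (qform v M)).
Proof.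
move=> v_unit; rewrite qform_depol v_unit mulr1.
by case: (qform v M) => a b; rewrite /depol_fid /=; ring.
Qed.

Lemma measured_ket (th : R) d r :
  (if ~~ (d (+) r) then ket_minus (th + r%:R * pi) else ket_plus (th + r%:R * pi))
  = if d then ket_plus th else ket_minus th.
Proof.
by case: d; case: r; rewrite /= ?mul1r ?mul0r ?addr0 ?ket_plus_addpi ?ket_minus_addpi.
Qed.

Definition memory_fid (stored : bool) (p x : R) : R := if stored then depol_fid p x else x.

Lemma round_fail_mismatch (sigma : 'M[C]_(2 * 2)) (U : 'M[C]_2) tf p d k r :
  adj sigma = sigma -> \tr sigma = 1 -> unitary U ->
  round_fail sigma U tf p d k r =
  mismatch (memory_fid (~~ tf) p (fid sigma U (ket R d)))
           (memory_fid tf p (fid sigma U (ket_plus (theta_of R k)))).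
Proof.
move=> hsigma tr_sigma uU; rewrite /round_fail /= measured_ket.
set rd := rteleport _ _ (Defs.proj (ket R d)).
set rt := rteleport _ _ (Defs.proj (ket_plus _)).
have hrd : adj rd = rd by exact: rteleport_herm (adj_proj _).
have hrt : adj rt = rt by exact: rteleport_herm (adj_proj _).
have trd : \tr rd = 1 by rewrite mxtrace_rteleport // mxtrace_proj qform_ket1.
have trt : \tr rt = 1 by rewrite mxtrace_rteleport // mxtrace_proj qform_ket_plus1.
case: tf; rewrite Re_CZ_measure ?depol_herm ?mxtrace_depol //.
  by rewrite Re_qform_depol ?qform_ket_plus1.
by rewrite Re_qform_depol ?qform_ket1.
Qed.

Lemma mismatch_mean (x : bool -> R) (y : 'I_8 -> R) :
  32%:R^-1 * \sum_(d : bool) \sum_(k < 8) \sum_(r : bool) mismatch (x d) (y k) =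
  mismatch (2^-1 * (x false + x true)) (8^-1 * \sum_(k < 8) y k).
Proof.
under eq_bigr do under eq_bigr do rewrite big_bool.
by rewrite big_bool /mismatch !big_ord_recr !big_ord0 /=; field.
Qed.

Lemma memory_fid_mean2 s (p a b : R) :
  memory_fid s p (2^-1 * (a + b)) = 2^-1 * (memory_fid s p a + memory_fid s p b).
Proof. by case: s; rewrite /memory_fid /depol_fid //; field. Qed.

Lemma memory_fid_mean8 s (p : R) (y : 'I_8 -> R) :
  memory_fid s p (8^-1 * \sum_(k < 8) y k) = 8^-1 * \sum_(k < 8) memory_fid s p (y k).
Proof.
case: s => //=; rewrite /depol_fid big_split /= -mulr_sumr sumr_const card_ord.
by rewrite -[(_ / 2) *+ 8]mulr_natr; field.
Qed.

Lemma mismatch_memory tf (p a b : R) :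
  mismatch (memory_fid (~~ tf) p a) (memory_fid tf p b)
  = 2^-1 + p * (mismatch a b - 2^-1).
Proof. by case: tf; rewrite /memory_fid /depol_fid /mismatch /=; field. Qed.

Lemma avg_fail_affine (sigma : 'M[C]_(2 * 2)) (U : 'M[C]_2) tf p :
  adj sigma = sigma -> \tr sigma = 1 -> unitary U ->
  avg_fail sigma U tf p = 2^-1 + p * (mismatch (Fdummy sigma U) (Ftrap sigma U) - 2^-1).
Proof.
move=> hsigma tr_sigma uU; rewrite /avg_fail.
under eq_bigr do under eq_bigr do under eq_bigr do rewrite round_fail_mismatch //.
rewrite (mismatch_mean (fun d => memory_fid (~~ tf) p (fid sigma U (ket R d)))
                       (fun k => memory_fid tf p (fid sigma U (ket_plus (theta_of R k))))).
by rewrite -memory_fid_mean2 -memory_fid_mean8 mismatch_memory.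
Qed.

End Qubit.

Lemma expRN_ge_tangent (R : realType) (x m : R) : expR (- m) * (1 + m - x) <= expR (- x).
Proof.
have -> : - x = - m + (m - x) by ring.
by rewrite expRD ler_wpM2l ?expR_ge0 // addrA addrK expR_ge1Dx.
Qed.

Section ExpectationBounds.
Context d (T : measurableType d) (R : realType) (P : probability T R).

Lemma Lfun_affine (X : T -> R) (a b : R) :
  X \in Lfun P 1 -> (fun w => a + b * X w) \in Lfun P 1.
Proof.
by move=> X1; rewrite (_ : (fun w => _) = cst a \+ b *: X) // rpredD ?rpredZ ?Lfun_cst.
Qed.

Lemma expectation_affine (X : T -> R) (a b m : R) :
  X \in Lfun P 1 -> 'E_P[X]%E = m%:E -> 'E_P[fun w => (a + b * X w)%R]%E = (a + b * m)%:E.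
Proof.
move=> X1 EX; rewrite (_ : (fun w => _) = cst a \+ b \o* X); last first.
  by apply/funext => w /=; rewrite mulrC.
rewrite expectationD ?Lfun_cst ?Lfun_scale // expectationZl // expectation_cst EX.
by rewrite -EFinM -EFinD.
Qed.

Lemma expectation_le_Lfun (X Y : T -> R) :
  X \in Lfun P 1 -> Y \in Lfun P 1 -> (forall w, X w <= Y w) -> ('E_P[X] <= 'E_P[Y])%E.
Proof.
move=> /Lfun1_integrable X1 /Lfun1_integrable Y1 XY; rewrite unlock.
by apply: le_integral => // w _; rewrite lee_fin.
Qed.

Lemma Lfun_expRN (X : T -> R) :
  X \in Lfun P 1 -> (forall w, 0 <= X w) -> (fun w => expR (- X w)) \in Lfun P 1.
Proof.
move=> /andP[/[!inE] mX _] X0; apply/Lfun1_integrable.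
apply: (le_integrable _ _ _ (finite_measure_integrable_cst P 1 measurableT)) => //.
  apply/measurable_realfun.measurable_EFinP.
  by apply: measurableT_comp => //; exact: measurableT_comp.
move=> w _ /=; rewrite lee_fin !ger0_norm ?expR_ge0 // expR_le1 oppr_le0.
exact: X0.
Qed.

Lemma expectation_expRN_ge (X : T -> R) (m : R) :
  X \in Lfun P 1 -> (forall w, 0 <= X w) -> 'E_P[X]%E = m%:E ->
  ((expR (- m))%:E <= 'E_P[fun w => expR (- X w)])%E.
Proof.
move=> X1 X0 EX.
(* integrate the tangent line of [fun x => expR (- x)] at [m] *)
have -> : (expR (- m))%:E = 'E_P[fun w => (expR (- m) * (1 + m) + - expR (- m) * X w)%R]%E.
  by rewrite (expectation_affine _ _ X1 EX); congr EFin; ring.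
apply: expectation_le_Lfun; [exact: Lfun_affine | exact: Lfun_expRN | move=> w].
rewrite (_ : _ + _ = expR (- m) * (1 + m - X w)); last by ring.
exact: expRN_ge_tangent.
Qed.

Lemma expectation_affine_expRN_le (X : T -> R) (a c m : R) :
  c <= 0 -> X \in Lfun P 1 -> (forall w, 0 <= X w) -> 'E_P[X]%E = m%:E ->
  ('E_P[fun w => (a + c * expR (- X w))%R] <= (a + c * expR (- m))%:E)%E.
Proof.
move=> c_le0 X1 X_ge0 EX.
have Y1 := Lfun_expRN X1 X_ge0.
have /fineK EY := expectation_fin_num Y1.
rewrite (expectation_affine _ _ Y1 (esym EY)) lee_fin lerD2l ler_wnM2l // -lee_fin EY.
exact: expectation_expRN_ge.
Qed.

End ExpectationBounds.

Unset Implicit Arguments. Set Strict Implicit.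

Theorem lemma3 (R : realType) (sigma : 'M[R[i]]_(2 * 2)) (U : 'M[R[i]]_2)
    (rate Tc : R) (dΩ : measure_display) (Ω : measurableType dΩ)
    (P : probability Ω R) (dt : Ω -> R) (trap_first : bool) :
  density sigma -> unitary U -> 0 < rate -> 0 < Tc ->
  measurable_fun setT dt -> P.-integrable setT (EFin \o dt) ->
  (forall w, 0 <= dt w) -> ('E_P[dt] = (rate^-1)%:E)%E ->
  let Fd := Fdummy sigma U in
  let Ft := Ftrap sigma U in
  Fd * (1 - Ft) + Ft * (1 - Fd) <= 2^-1 ->
  ('E_P[fun w => avg_fail sigma U trap_first (expR (- dt w / Tc))]
     <= (expR (- (rate * Tc)^-1) * (Fd * (1 - Ft) + Ft * (1 - Fd))
         + 2^-1 * (1 - expR (- (rate * Tc)^-1)))%:E)%E.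
Proof.
move=> [hsigma [_ tr_sigma]] uU rate_gt0 Tc_gt0 _ dt1 dt_ge0 Edt Fd Ft mismatch_le.
pose X w := dt w / Tc.
have X1 : X \in Lfun P 1 by apply: Lfun_scale => //; exact/Lfun1_integrable.
have EX : ('E_P[X] = ((rate * Tc)^-1)%:E)%E.
  rewrite (_ : X = Tc^-1 \o* dt) // expectationZl ?Edt; last exact/Lfun1_integrable.
  by rewrite -EFinM invfM mulrC.
have -> : (fun w => avg_fail sigma U trap_first (expR (- dt w / Tc)))
          = (fun w => 2^-1 + (mismatch Fd Ft - 2^-1) * expR (- X w)).
  by apply/funext => w; rewrite avg_fail_affine // mulNr mulrC.
apply: le_trans (expectation_affine_expRN_le _ _ X1 _ EX) _.
- by rewrite subr_le0.
- by move=> w; apply: divr_ge0 (dt_ge0 w) (ltW Tc_gt0).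
by rewrite lee_fin -subr_ge0 (_ : _ - _ = 0) // /mismatch; ring.
Qed.
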